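(* Let $(G,k)$ be an instance and let $v\in V$ satisfy $|N(v)|>7k$ and $\rho(v)\le \frac{|N(v)|(|N(v)|-1)}{4}$. Then for every feasible solution $X$ with $v\notin X$, the connected component of $G-X$ containing $v$ is a tree.
   Context: Graphs are undirected, without self-loops, possibly with multi-edges. $N(v)$ is the set of vertices adjacent to $v$; $\rho(v)$ is the number of unordered pairs $\{u_1,u_2\}\subseteq N(v)$ joined by at least one edge (parallel edges counted once). A vertex set induces a clique if between any two distinct vertices of it there is exactly one edge, and a tree if it is connected and has no cycle (two parallel edges form a cycle). For an integer $k\ge1$, a feasible solution is a set $X\subseteq V$ with $|X|\le k$ such that every connected component of $G-X$ is a clique or a tree. *)

(* A multigraph on a finite vertex type T is given by an
   edge-multiplicity function m : T -> T -> nat (number of parallel edges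
   between two vertices), assumed symmetric and loopless. *)
From mathcomp Require Import all_boot.
Set Implicit Arguments. Unset Strict Implicit. Unset Printing Implicit Defensive.

Section Multigraph.
Variables (T : finType) (m : T -> T -> nat).

Definition multigraph := (forall x y, m x y = m y x) /\ (forall x, m x x = 0).

Definition adj : rel T := fun x y => 0 < m x y.

Definition nbhd (v : T) : {set T} := [set u | adj v u].

Definition rho (v : T) : nat :=
  #|[set p : {set T} | [&& p \subset nbhd v, #|p| == 2 &
      [exists u1 in p, exists u2 in p, (u1 != u2) && adj u1 u2]]]|.

Definition adj_in (S : {set T}) : rel T :=
  fun x y => [&& x \in S, y \in S & adj x y].

Definition is_clique (S : {set T}) : Prop :=
  forall x y, x \in S -> y \in S -> x != y -> m x y = 1.

Definition connected_in (S : {set T}) : Prop :=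
  forall x y, x \in S -> y \in S -> connect (adj_in S) x y.

Definition has_cycle_in (S : {set T}) : Prop :=
  (exists x y, [/\ x \in S, y \in S, x != y & 2 <= m x y]) \/
  (exists s : seq T, [/\ 3 <= size s, uniq s, all (mem S) s & cycle adj s]).

Definition is_tree (S : {set T}) : Prop :=
  connected_in S /\ ~ has_cycle_in S.

Definition comp_del (X : {set T}) (w : T) : {set T} :=
  [set y | connect (adj_in (~: X)) w y].

Definition feasible (k : nat) (X : {set T}) : Prop :=
  #|X| <= k /\
  forall w, w \notin X -> is_clique (comp_del X w) \/ is_tree (comp_del X w).

End Multigraph.

(* If the component of v in G - X were a clique, then the at least |N(v)| - k
   neighbours of v outside X would lie in it and be pairwise adjacent, so
   rho(v) >= C(|N(v)| - k, 2). Since |N(v)| > 7k, this exceeds the bound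
   |N(v)|(|N(v)| - 1)/4 on rho(v); hence the component is a tree. *)
From mathcomp Require Import all_boot.
From mathcomp Require Import zify.

Set Implicit Arguments.
Unset Strict Implicit.
Unset Printing Implicit Defensive.

Lemma card_le_setD_add (T : finType) (A B : {set T}) : #|A| <= #|A :\: B| + #|B|.
Proof.
rewrite cardsD; have : #|A :&: B| <= #|B| by apply/subset_leq_card/subsetIr.
have : #|A :&: B| <= #|A| by apply/subset_leq_card/subsetIl.
lia.
Qed.

Lemma dbl_bin2 (s : nat) : 2 * 'C(s, 2) = s * (s - 1).
Proof. by rewrite (mul_bin_left s 1) bin1 mulnC. Qed.

Lemma mul_pred_lt_dbl_shift (n k : nat) :
  1 <= k -> 7 * k < n -> n * (n - 1) < 2 * ((n - k) * (n - k - 1)).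
Proof.
move=> k_gt0 n_gt.
have [u ->] : exists u, n = 7 * k + 1 + u by exists (n - 7 * k - 1); lia.
have -> : 7 * k + 1 + u - 1 = 7 * k + u by lia.
have -> : 7 * k + 1 + u - k - 1 = 6 * k + u by lia.
rewrite (_ : 7 * k + 1 + u - k = 6 * k + 1 + u); last by lia.
nia.
Qed.

Lemma mul_pred_lt_bin2 (n s k : nat) :
  1 <= k -> 7 * k < n -> n - k <= s -> n * (n - 1) < 4 * 'C(s, 2).
Proof.
move=> k_gt0 n_gt nk_le_s.
rewrite -[4]/(2 * 2) -mulnA dbl_bin2.
apply: leq_trans (mul_pred_lt_dbl_shift k_gt0 n_gt) _.
by rewrite leq_mul2l leq_mul ?leq_sub2r.
Qed.

Section Multigraph.
Variables (T : finType) (m : T -> T -> nat).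

Lemma rho_ge_bin2 (v : T) (S : {set T}) :
  S \subset nbhd m v ->
  {in S &, forall x y, x != y -> adj m x y} ->
  'C(#|S|, 2) <= rho m v.
Proof.
move=> S_nbhd S_adj; rewrite -cards_draws; apply: subset_leq_card.
apply/subsetP => p; rewrite !inE => /andP [pS p2].
rewrite (subset_trans pS S_nbhd) p2 /=.
case/cards2P: p2 pS => x [y [xy ->]] pS.
have xS : x \in S by apply: (subsetP pS); rewrite !inE eqxx.
have yS : y \in S by apply: (subsetP pS); rewrite !inE eqxx orbT.
apply/existsP; exists x; rewrite !inE eqxx /=.
apply/existsP; exists y; rewrite !inE eqxx orbT xy /=.
exact: S_adj.
Qed.

Lemma nbhd_setD_sub_comp_del (X : {set T}) (v : T) :
  v \notin X -> nbhd m v :\: X \subset comp_del m X v.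
Proof.
move=> vX; apply/subsetP => x; rewrite !inE => /andP [xX vx].
by apply: connect1; rewrite /adj_in !inE vX xX vx.
Qed.

Lemma clique_adj (S : {set T}) :
  is_clique m S -> {in S &, forall x y, x != y -> adj m x y}.
Proof. by move=> S_cl x y xS yS xy; rewrite /adj S_cl. Qed.

End Multigraph.

Theorem mainTheorem3 (T : finType) (m : T -> T -> nat) (k : nat) (v : T) :
  multigraph m -> 1 <= k ->
  7 * k < #|nbhd m v| ->
  4 * rho m v <= #|nbhd m v| * (#|nbhd m v| - 1) ->
  forall X : {set T}, feasible m k X -> v \notin X ->
  is_tree m (comp_del m X v).
Proof.
move=> _ k_gt0 n_gt rho_le X [X_le X_feas] vX.
case: (X_feas v vX) => [comp_clique | //]; exfalso.
set S := nbhd m v :\: X.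
have S_comp := subsetP (nbhd_setD_sub_comp_del m vX).
have S_adj : {in S &, forall x y, x != y -> adj m x y}.
  by move=> x y /S_comp xC /S_comp yC; apply: clique_adj comp_clique x y xC yC.
have rho_ge := rho_ge_bin2 (subsetDl (nbhd m v) X) S_adj.
have S_ge : #|nbhd m v| - k <= #|S|.
  by have := card_le_setD_add (nbhd m v) X; rewrite -/S; lia.
have := mul_pred_lt_bin2 k_gt0 n_gt S_ge.
by rewrite -/S in rho_ge; lia.
Qed.
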